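(* Let $n\ge1$, $z\in I_n$, and assume (H2)$_j(z)$ and (H3)$_j(z)$ for all $1\le j\le n$. Then for every $1\le j\le n$ and every $k\in[-\pi,\pi]^d$ with $a(k)\le\gamma j^{-1}\log j$, $$|f_j(k;z)|\le e^{CK_3\beta}\,e^{-(1-C(K_2+K_3)\beta)\,j\,a(k)},$$ where $C$ is a positive constant depending only on $d,\gamma,\delta,\rho$ (not on $K_1,\dots,K_5$, $k$, $j$, $n$, or $\beta$), valid for $\beta$ sufficiently small (depending on the $K_i$).
   Context: Let $d>4$, $L\ge1$, $\beta=L^{-d}$; fix $\gamma,\delta,\rho>0$ with $0<\frac{d-4}{2}-\rho<\gamma<\gamma+\delta<1\wedge\frac{d-4}{2}$. Let $D\ge0$ on $\mathbb Z^d$ with $\sum_xD(x)=1$, $\hat D(k)=\sum_xD(x)e^{ik\cdot x}$, $a(k)=1-\hat D(k)$, $\sigma^2=-\nabla^2\hat D(0)$. For $z>0$, $k\in[-\pi,\pi]^d$ let $f_n(k;z)$ ($n\ge0$, $f_0=1$), $g_n(k;z)$ ($n\ge1$) be complex numbers, and $v_0(z)=1$, $v_n(z)=b_n/(1+c_n)$ with $b_n=-\sigma^{-2}\sum_{m=1}^n\nabla^2g_m(0;z)$, $c_n=\sum_{m=1}^n(m-1)g_m(0;z)$. Let $z_0=z_1=1$, $z_{n+1}=1-\sum_{m=2}^{n+1}g_m(0;z_n)$, and given constants $K_1,\dots,K_5>0$, $I_n=[z_n-K_1\beta n^{-(d-2)/2},z_n+K_1\beta n^{-(d-2)/2}]$.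 (H2)$_j(z)$: $|v_j(z)-v_{j-1}(z)|\le K_2\beta j^{-(d-2)/2}$. (H3)$_j(z)$: for all $k$ with $a(k)\le\gamma j^{-1}\log j$, $f_j(k;z)=\prod_{i=1}^j[1-v_i(z)a(k)+r_i(k)]$ for some numbers $r_i(k)=r_i(k;z)$ with $|r_i(0)|\le K_3\beta i^{-(d-2)/2}$ and $|r_i(k)-r_i(0)|\le K_3\beta a(k)i^{-\delta}$. *)

From mathcomp Require Import all_boot all_order all_algebra.
From mathcomp Require Import all_classical all_reals all_analysis.
From mathcomp Require Export complex.
Set Implicit Arguments. Unset Strict Implicit. Unset Printing Implicit Defensive.
Import Order.TTheory GRing.Theory Num.Theory.
Import numFieldNormedType.Exports.
Local Open Scope ring_scope.
Local Open Scope classical_set_scope.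
Local Open Scope complex_scope.

Section Defs.
Variable R : realType.
Variable d : nat.

(* Points of Z^d are functions 'I_d -> int; k in R^d is a row vector. *)

(* the box [-N,N]^d, enumerated by {ffun 'I_d -> 'I_(2N+1)} *)
Definition box_pt (N : nat) (y : {ffun 'I_d -> 'I_(N.*2.+1)}) : 'I_d -> int :=
  fun i => (nat_of_ord (y i))%:Z - N%:Z.

Definition boxsum (N : nat) (F : ('I_d -> int) -> R) : R :=
  \sum_(y : {ffun 'I_d -> 'I_(N.*2.+1)}) F (box_pt y).

Definition dotk (k : 'rV[R]_d) (x : 'I_d -> int) : R :=
  \sum_(i < d) k 0 i * (x i)%:~R.

(* D >= 0 and sum_{x in Z^d} D(x) = 1 (sum over Z^d = limit of box sums) *)
Definition step_distr (D : ('I_d -> int) -> R) : Prop :=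
  (forall x, 0 <= D x) /\ (fun N => boxsum N D) @ \oo --> (1 : R).

(* \hat D(k) = sum_x D(x) e^{i k.x} = sum_x D(x) cos(k.x) + i sum_x D(x) sin(k.x) *)
Definition Dhat (D : ('I_d -> int) -> R) (k : 'rV[R]_d) : R[i] :=
  (limn (fun N => boxsum N (fun x => D x * cos (dotk k x))))
  +i* (limn (fun N => boxsum N (fun x => D x * sin (dotk k x)))).

Definition afun (D : ('I_d -> int) -> R) (k : 'rV[R]_d) : R[i] := 1 - Dhat D k.

Definition in_torus (k : 'rV[R]_d) : Prop := forall i, - pi <= k 0 i <= pi.

Definition lap0 (F : 'rV[R]_d -> R[i]) : R[i] :=
  (\sum_(i < d) derive1n 2 (fun t : R => complex.Re (F (t *: delta_mx 0 i))) 0)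
  +i* (\sum_(i < d) derive1n 2 (fun t : R => complex.Im (F (t *: delta_mx 0 i))) 0).

Definition sigma2 (D : ('I_d -> int) -> R) : R[i] := - lap0 (Dhat D).

Section Seq.
Variables (D : ('I_d -> int) -> R) (g : nat -> 'rV[R]_d -> R -> R[i]).

Definition bseq (z : R) (n : nat) : R[i] :=
  - (sigma2 D)^-1 * \sum_(1 <= m < n.+1) lap0 (fun k => g m k z).

Definition cseq (z : R) (n : nat) : R[i] :=
  \sum_(1 <= m < n.+1) (m.-1)%:R * g m 0 z.

Definition vseq (z : R) (n : nat) : R[i] :=
  if n == 0%N then 1 else bseq z n / (1 + cseq z n).

Fixpoint zseq (n : nat) : R :=
  match n with
  | 0 => 1
  | p.+1 => 1 - \sum_(2 <= m < p.+2) complex.Re (g m 0 (zseq p))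
  end.

Definition decay (n : nat) : R := (n%:R) `^ (- ((d%:R - 2) / 2)).

Definition in_In (beta K1 : R) (n : nat) (z : R) : Prop :=
  zseq n - K1 * beta * decay n <= z <= zseq n + K1 * beta * decay n.

Definition hypH2 (beta K2 : R) (j : nat) (z : R) : Prop :=
  `|vseq z j - vseq z j.-1| <= (K2 * beta * decay j)%:C.

Definition hypH3 (f : nat -> 'rV[R]_d -> R -> R[i]) (gam del beta K3 : R)
    (j : nat) (z : R) : Prop :=
  exists r : nat -> 'rV[R]_d -> R[i],
    forall k : 'rV[R]_d, in_torus k ->
      afun D k <= (gam * (j%:R)^-1 * ln (j%:R))%:C ->
      f j k z = \prod_(1 <= i < j.+1) (1 - vseq z i * afun D k + r i k) /\
      (forall i : nat, (1 <= i <= j)%N ->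
         `|r i 0| <= (K3 * beta * decay i)%:C /\
         `|r i k - r i 0| <= (K3 * beta)%:C * afun D k * ((i%:R) `^ (- del))%:C).
End Seq.
End Defs.

From mathcomp Require Import all_boot all_order all_algebra.
From mathcomp Require Import all_classical all_reals all_analysis.
From mathcomp Require Import complex.
From mathcomp Require Import ring lra.
Set Implicit Arguments. Unset Strict Implicit. Unset Printing Implicit Defensive.
Import Order.TTheory GRing.Theory Num.Theory.
Import numFieldNormedType.Exports.
Local Open Scope ring_scope.
Local Open Scope complex_scope.

(** Writing [v_i = 1 + (v_i - 1)] and [r_i(k) = r_i(0) + (r_i(k) - r_i(0))],
    each factor of (H3) is at most [1 - a + |v_i - 1| a + |r_i(0)| + K3 beta a].
    Telescoping (H2) gives [|v_i - 1| <= K2 beta sum_i i^{-(d-2)/2} <= 3 K2 beta]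
    since [d > 4], and [sum_i |r_i(0)| <= 3 K3 beta] likewise. With
    [1 + x <= e^x] the product is at most [e^{3 K3 beta} e^{-(1 - 3(K2+K3)beta) j a}],
    so [C = 3] works for every [beta <= 1]. *)

Lemma decay_le_inv_pow32 (R : realType) (d i : nat) : (4 < d)%N -> (1 <= i)%N ->
  decay R d i <= (i%:R * Num.sqrt (i%:R : R))^-1.
Proof.
move=> d4 i1; rewrite /decay.
have i1R : (1 : R) <= i%:R by rewrite ler1n.
have d5 : (5 : R) <= d%:R by rewrite ler_nat.
apply: (@le_trans _ _ ((i%:R : R) `^ (- (1 + 2^-1)))).
  by apply: ler_powR => //; lra.
rewrite powRN powRD; last by apply/implyP => _; lra.
by rewrite powRr1 ?powR12_sqrt // (le_trans _ i1R).
Qed.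

(* The bound [3 - 2 / sqrt j] is chosen so that the induction step closes. *)
Lemma sum_inv_pow32_le (R : realType) (j : nat) : (1 <= j)%N ->
  \sum_(1 <= i < j.+1) ((i%:R : R) * Num.sqrt (i%:R))^-1 <= 3 - 2 / Num.sqrt (j%:R).
Proof.
elim: j => [//|[|j] IH] _.
  by rewrite big_nat1 sqrtr1 mul1r invr1; lra.
rewrite big_nat_recr //=.
have := IH isT.
set a := Num.sqrt (j.+1%:R : R); set b := Num.sqrt (j.+2%:R : R).
have a0 : 0 < a by rewrite sqrtr_gt0 ltr0n.
have b0 : 0 < b by rewrite sqrtr_gt0 ltr0n.
have hb : b ^+ 2 = j.+2%:R by rewrite sqr_sqrtr // ler0n.
have hab : b ^+ 2 = a ^+ 2 + 1 by rewrite hb sqr_sqrtr ?ler0n // -natr1.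
rewrite -hb -exprSr.
suff : 0 <= 2 / a - 2 / b - (b ^+ 3)^-1 by lra.
have numer_ge0 : 0 <= 2 * b ^+ 3 - 2 * a * b ^+ 2 - a.
  have ab : a <= b by nra.
  nra.
have -> : 2 / a - 2 / b - (b ^+ 3)^-1 = (2 * b ^+ 3 - 2 * a * b ^+ 2 - a) / (a * b ^+ 3).
  by field; rewrite ?gt_eqF ?exprn_gt0.
by rewrite divr_ge0 // mulr_ge0 // ?exprn_ge0 // ltW.
Qed.

Lemma sum_decay_le3 (R : realType) (d j : nat) : (4 < d)%N ->
  \sum_(1 <= i < j.+1) decay R d i <= 3.
Proof.
move=> d4; case: j => [|j]; first by rewrite big_geq.
apply: (@le_trans _ _ (\sum_(1 <= i < j.+2) ((i%:R : R) * Num.sqrt (i%:R))^-1)).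
  rewrite big_nat_cond [X in _ <= X]big_nat_cond.
  by apply: ler_sum => i /andP[/andP[i1 _] _]; exact: decay_le_inv_pow32.
apply: le_trans (@sum_inv_pow32_le R j.+1 isT) _.
have : 0 <= 2 / Num.sqrt (j.+1%:R : R) by rewrite divr_ge0 ?sqrtr_ge0.
lra.
Qed.

Section VseqBound.
Variables (R : realType) (d : nat) (D : ('I_d -> int) -> R).
Variables (g : nat -> 'rV[R]_d -> R -> R[i]) (beta K2 z : R) (n : nat).
Hypothesis H2 : forall j, (1 <= j <= n)%N -> hypH2 D g beta K2 j z.

Lemma norm_vseq_sub1_le_sum i : (i <= n)%N ->
  `|vseq D g z i - 1| <= (K2 * beta * \sum_(1 <= m < i.+1) decay R d m)%:C.
Proof.
elim: i => [|i IH] iN.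
  by rewrite /vseq /= subrr normr0 big_geq // mulr0.
have -> : vseq D g z i.+1 - 1
          = (vseq D g z i.+1 - vseq D g z i) + (vseq D g z i - 1) by rewrite addrA subrK.
rewrite big_nat_recr // mulrDr rmorphD [X in _ <= X]addrC.
by apply: le_trans (ler_normD _ _) _; apply: lerD; [exact: H2 | exact/IH/ltnW].
Qed.

Lemma norm_vseq_sub1_le i : (4 < d)%N -> 0 <= K2 * beta -> (i <= n)%N ->
  `|vseq D g z i - 1| <= (3 * (K2 * beta))%:C.
Proof.
move=> d4 K2b iN; apply: le_trans (norm_vseq_sub1_le_sum iN) _.
by rewrite lecR mulrC ler_wpM2r // sum_decay_le3.
Qed.

End VseqBound.

Lemma norm_perturbed_factor_le (R : realType) (v r0 rk : R[i]) (a c2 c3 e t : R) :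
  0 <= a <= 1 -> `|v - 1| <= c2%:C -> `|r0| <= e%:C ->
  `|rk - r0| <= c3%:C * a%:C * t%:C -> 0 <= c3 -> t <= 1 ->
  `|1 - v * a%:C + rk| <= (expR (- (1 - c2 - c3) * a + e))%:C.
Proof.
move=> /andP[a0 a1] hv hr0 hrk c30 t1.
have -> : 1 - v * a%:C + rk = (1 - a)%:C - (v - 1) * a%:C + r0 + (rk - r0).
  by rewrite rmorphB rmorph1; ring.
have hva : `|(v - 1) * a%:C| <= (c2 * a)%:C.
  by rewrite normrM (ger0_norm (x := a%:C)) ?ler0c // rmorphM ler_wpM2r ?ler0c.
have hr : `|rk - r0| <= (c3 * a)%:C.
  by apply: le_trans hrk _; rewrite -!rmorphM lecR ler_piMr // mulr_ge0.
apply: le_trans (ler_normD _ _) _; apply: le_trans (lerD (ler_normD _ _) hr) _.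
apply: le_trans (lerD (lerD (ler_normB _ _) hr0) (lexx _)) _.
rewrite ger0_norm ?ler0c ?subr_ge0 //.
apply: le_trans (lerD (lerD (lerD (lexx _) hva) (lexx _)) (lexx _)) _.
rewrite -!rmorphD lecR; apply: le_trans (expR_ge1Dx _); lra.
Qed.

Lemma norm_prod_le_expR (R : realType) (F : nat -> R[i]) (b a : R) (e : nat -> R) j :
  (forall i, (1 <= i <= j)%N -> `|F i| <= (expR (- b * a + e i))%:C) ->
  `|\prod_(1 <= i < j.+1) F i|
    <= (expR (- b * a * j%:R + \sum_(1 <= i < j.+1) e i))%:C.
Proof.
move=> hF; rewrite normr_prod.
apply: (@le_trans _ _ (\prod_(1 <= i < j.+1) (expR (- b * a + e i))%:C)).
  rewrite big_nat_cond [X in _ <= X]big_nat_cond.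
  by apply: ler_prod => i /andP[ij _]; rewrite normr_ge0 hF.
by rewrite -rmorph_prod -expR_sum big_split /= sumr_const_nat subn1 mulr_natr.
Qed.

(* (H3) only constrains [a(k)] through comparisons in [R[i]], which force it
   to be real; nonnegativity comes from the bound on [r_1(k) - r_1(0)]. *)
Lemma real_ge0_of_norm_le_scale (R : realType) (A x : R[i]) (c : R) :
  0 < c -> `|x| <= c%:C * A -> A = (complex.Re A)%:C /\ 0 <= complex.Re A.
Proof.
move=> c0 hx.
have A0 : 0 <= A by move: (le_trans (normr_ge0 _) hx); rewrite pmulr_rge0 // ltcR.
have hA : A = (complex.Re A)%:C by rewrite RRe_real // ger0_real.
by split=> //; rewrite -ler0c -hA.
Qed.

Lemma mul_inv_ln_le1 (R : realType) (gam : R) (j : nat) : 0 <= gam <= 1 -> (1 <= j)%N ->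
  gam * (j%:R)^-1 * ln (j%:R) <= 1.
Proof.
move=> /andP[g0 g1] j1; have j0 : (0 : R) < j%:R by rewrite ltr0n.
have lnj0 : 0 <= ln (j%:R : R) by rewrite ln_ge0 // ler1n.
have x1 : (j%:R : R)^-1 * ln j%:R <= 1.
  by rewrite ler_pdivrMl // mulr1 ltW // ln_sublinear.
have x0 : 0 <= (j%:R : R)^-1 * ln j%:R by rewrite mulr_ge0 // invr_ge0 ltW.
by rewrite -mulrA; apply: le_trans (ler_wpM2r x0 g1) _; rewrite mul1r.
Qed.

Theorem lemma2p2 (R : realType) (d : nat) (gam del rho : R) :
  (4 < d)%N -> 0 < gam -> 0 < del -> 0 < rho ->
  0 < (d%:R - 4) / 2 - rho -> (d%:R - 4) / 2 - rho < gam ->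
  gam + del < Num.min 1 ((d%:R - 4) / 2) ->
  exists C : R, 0 < C /\
  forall K1 K2 K3 K4 K5 : R,
    0 < K1 -> 0 < K2 -> 0 < K3 -> 0 < K4 -> 0 < K5 ->
  exists beta0 : R, 0 < beta0 /\
  forall L : R, 1 <= L -> L `^ (- d%:R) <= beta0 ->
  let beta := L `^ (- d%:R) in
  forall (D : ('I_d -> int) -> R) (f g : nat -> 'rV[R]_d -> R -> R[i]),
    step_distr D ->
  forall (n : nat) (z : R),
    (1 <= n)%N -> 0 < z -> in_In g beta K1 n z ->
    (forall j : nat, (1 <= j <= n)%N ->
       hypH2 D g beta K2 j z /\ hypH3 D g f gam del beta K3 j z) ->
  forall (j : nat) (k : 'rV[R]_d),
    (1 <= j <= n)%N -> in_torus k ->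
    afun D k <= (gam * (j%:R)^-1 * ln (j%:R))%:C ->
    `|f j k z| <= (expR (C * K3 * beta)
                   * expR (- (1 - C * (K2 + K3) * beta) * j%:R
                           * complex.Re (afun D k)))%:C.
Proof.
move=> d4 gam0 del0 _ _ _ hgd.
have gam1 : gam <= 1 by move: hgd; rewrite lt_min => /andP[+ _]; lra.
exists 3; split => // K1 K2 K3 K4 K5 _ K20 K30 _ _.
exists 1; split => // L L1 _ beta D f g _ n z _ _ _ Hyp j k /andP[j1 jn] kt Ha.
have b0 : 0 < beta by rewrite /beta powR_gt0 // (lt_le_trans ltr01 L1).
have K2b : 0 <= K2 * beta by rewrite mulr_ge0 // ltW.
have K3b : 0 <= K3 * beta by rewrite mulr_ge0 // ltW.
have [_ [r /(_ k kt Ha) [-> Hr]]] := Hyp j (introT andP (conj j1 jn)).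
have Hr1 := (Hr 1%N j1).2; rewrite powR1 rmorph1 mulr1 in Hr1.
have [hA a0] := real_ge0_of_norm_le_scale (mulr_gt0 K30 b0) Hr1.
set a := complex.Re (afun D k) in hA a0 *.
have a1 : a <= 1.
  by move: Ha; rewrite hA lecR => /le_trans; apply; apply: mul_inv_ln_le1; rewrite ?gam1 ?ltW.
rewrite hA in Hr *.
apply: le_trans (@norm_prod_le_expR _ _ (1 - 3 * (K2 * beta) - K3 * beta) a
                   (fun i => K3 * beta * decay R d i) j _) _.
  move=> i /[dup] ij /andP[i1 ij']; have [hr0 hrk] := Hr i ij.
  apply: norm_perturbed_factor_le hr0 hrk K3b _; first by rewrite a0.
    by apply: norm_vseq_sub1_le (leq_trans ij' jn) => // m /Hyp[].
  rewrite -[X in _ <= X](powRr0 (i%:R : R)); apply: ler_powR; [by rewrite ler1n | lra].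
rewrite lecR -expRD ler_expR -mulr_sumr.
have := ler_wpM2l K3b (@sum_decay_le3 R d j d4).
have := mulr_ge0 K3b (mulr_ge0 a0 (ler0n _ j)).
lra.
Qed.
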